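(* Let $T$ be a complete theory and $\phi(x,y)$ a formula. The following are equivalent: (1) $\phi(x,y)$ has the strict order property. (2) There exist a model $M$ of $T$, a tuple $b\in M$ and $\sigma\in\mathrm{Aut}(M)$ such that, with $U=\phi(M,b)$, $U\subsetneq\sigma(U)$. (3) There exist a model $M$ of $T$, a tuple $b\in M$ and $\sigma\in\mathrm{Aut}(M)$ such that, with $U=\phi(M,b)$, $\xi_{\sigma,U}(M)$ consists of $\Theta$ together with possibly $\bar0$ and $\bar1$ (i.e. $\Theta\subseteq\xi_{\sigma,U}(M)\subseteq\Theta\cup\{\bar0,\bar1\}$). (4) The same as (3) with the additional requirement $\sigma\in W_b$.
   Context: $\phi(x,y)$ has the strict order property if there are a model $M$ and tuples $(b_i)_{i<\omega}$ with $\phi(M,b_i)\subsetneq\phi(M,b_{i+1})$ for all $i$. Subsets of $\mathbb{Z}$ are identified with binary $\mathbb{Z}$-sequences. For $\sigma\in\mathrm{Aut}(M)$ and $U\subseteq M$, $\xi_{\sigma,U}(a)=\{n\in\mathbb{Z}:\sigma^n(a)\in U\}$ and $\xi_{\sigma,U}(M)$ is its image. $\bar1\bar0=\{i\in\mathbb{Z}:i\le0\}$, $\Theta$ is its orbit under the shift $I\mapsto I+1$ (i.e. all sets $\{i:i\le k\}$, $k\in\mathbb{Z}$), $\bar0=\emptyset$ and $\bar1=\mathbb{Z}$. $W_b$ is the set of automorphisms $\sigma$ of $M$ such that $(\sigma^n(b))_{n\in\mathbb{Z}}$ is an indiscernible sequence. *)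

From HB Require Import structures.
From mathcomp Require Import all_boot all_order all_algebra.

Set Implicit Arguments.
Unset Strict Implicit.
Unset Printing Implicit Defensive.
Import Order.TTheory GRing.Theory Num.Theory.

Record language := Language {
  funs : Type; fun_ar : funs -> nat;   (* constants = 0-ary function symbols *)
  rels : Type; rel_ar : rels -> nat }.

Section Syntax.
Variable L : language.

Inductive term (n : nat) : Type :=
| Tvar : 'I_n -> term n
| Tapp : forall f : funs L, ('I_(fun_ar f) -> term n) -> term n.

(* formula n : formulas whose free variables are among 'I_n;
   the quantifiers bind the new variable ord0 of 'I_n.+1 *)
Inductive formula : nat -> Type :=
| Ftrue  : forall n, formula n
| Ffalse : forall n, formula n
| Feq    : forall n, term n -> term n -> formula n
| Frel   : forall n (r : rels L), ('I_(rel_ar r) -> term n) -> formula n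
| Fneg   : forall n, formula n -> formula n
| Fand   : forall n, formula n -> formula n -> formula n
| For    : forall n, formula n -> formula n -> formula n
| Fimp   : forall n, formula n -> formula n -> formula n
| Fex    : forall n, formula n.+1 -> formula n
| Fall   : forall n, formula n.+1 -> formula n.

Definition sentence := formula 0.
Definition theory := sentence -> Prop.

End Syntax.

Record structure (L : language) := Structure {
  carrier :> Type;
  inhabitant : carrier;
  interp_fun : forall f : funs L, ('I_(fun_ar f) -> carrier) -> carrier;
  interp_rel : forall r : rels L, ('I_(rel_ar r) -> carrier) -> Prop }.

Section Semantics.
Variables (L : language) (M : structure L).

Fixpoint teval n (v : 'I_n -> M) (t : term L n) : M :=
  match t with
  | Tvar i => v i
  | Tapp f ts => @interp_fun L M f (fun i => teval v (ts i))
  end.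

Definition scons n (x : M) (v : 'I_n -> M) : 'I_n.+1 -> M :=
  fun i => match unlift ord0 i with Some j => v j | None => x end.

Fixpoint sat n (v : 'I_n -> M) (phi : formula L n) {struct phi} : Prop :=
  match phi in formula _ n return ('I_n -> M) -> Prop with
  | Ftrue _ => fun _ => True
  | Ffalse _ => fun _ => False
  | Feq _ t1 t2 => fun v => teval v t1 = teval v t2
  | Frel _ r ts => fun v => @interp_rel L M r (fun i => teval v (ts i))
  | Fneg _ p => fun v => ~ sat v p
  | Fand _ p q => fun v => sat v p /\ sat v q
  | For _ p q => fun v => sat v p \/ sat v q
  | Fimp _ p q => fun v => sat v p -> sat v q
  | Fex _ p => fun v => exists x : M, sat (scons x v) p
  | Fall _ p => fun v => forall x : M, sat (scons x v) p
  end v.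

Definition no_vars : 'I_0 -> M := fun i => match (notF (ltn_ord i)) with end.
Definition satS (s : sentence L) : Prop := sat no_vars s.

End Semantics.

Definition is_model (L : language) (T : theory L) (M : structure L) : Prop :=
  forall s, T s -> satS M s.

Definition complete_theory (L : language) (T : theory L) : Prop :=
  (exists M : structure L, is_model T M) /\
  forall s : sentence L,
    (forall M : structure L, is_model T M -> satS M s) \/
    (forall M : structure L, is_model T M -> satS M (Fneg s)).

(* the variables 'I_(n+m) of phi: the first n are x, the last m are y *)
Definition env2 (L : language) (M : structure L) n m
  (a : 'I_n -> M) (b : 'I_m -> M) : 'I_(n + m) -> M :=
  fun k => match split k with inl i => a i | inr j => b j end.

Definition defset (L : language) (M : structure L) n m
  (phi : formula L (n + m)) (b : 'I_m -> M) : ('I_n -> M) -> Prop :=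
  fun a => sat (env2 a b) phi.

Definition strict_subset (A : Type) (U V : A -> Prop) : Prop :=
  (forall a, U a -> V a) /\ (exists a, V a /\ ~ U a).

(* strict order property (for a complete theory T: in some model of T) *)
Definition SOP (L : language) (T : theory L) n m (phi : formula L (n + m)) : Prop :=
  exists (M : structure L) (b : nat -> 'I_m -> M),
    is_model T M /\
    forall i : nat, strict_subset (defset phi (b i)) (defset phi (b i.+1)).

Record automorphism (L : language) (M : structure L) := Automorphism {
  aut_fun :> M -> M;
  aut_inv : M -> M;
  aut_funK : cancel aut_fun aut_inv;
  aut_invK : cancel aut_inv aut_fun;
  aut_fun_hom : forall (f : funs L) (args : 'I_(fun_ar f) -> M),
      aut_fun (@interp_fun L M f args) = @interp_fun L M f (fun i => aut_fun (args i));
  aut_rel_hom : forall (r : rels L) (args : 'I_(rel_ar r) -> M),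
      @interp_rel L M r args <-> @interp_rel L M r (fun i => aut_fun (args i)) }.

Definition aut_pow (L : language) (M : structure L) (s : automorphism M)
  (k : int) : M -> M :=
  match k with
  | Posz p => iter p (aut_fun s)
  | Negz p => iter p.+1 (aut_inv s)
  end.

Definition tact (L : language) (M : structure L) n (f : M -> M)
  (a : 'I_n -> M) : 'I_n -> M := fun i => f (a i).

Definition aut_image (L : language) (M : structure L) n (s : automorphism M)
  (U : ('I_n -> M) -> Prop) : ('I_n -> M) -> Prop :=
  fun c => exists a, U a /\ forall i, c i = s (a i).

Definition xi (L : language) (M : structure L) n (s : automorphism M)
  (U : ('I_n -> M) -> Prop) (a : 'I_n -> M) : int -> Prop :=
  fun k => U (tact (aut_pow s k) a).

(* I belongs to the image xi_{sigma,U}(M) (sets of integers up to extensionality) *)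
Definition in_xi_image (L : language) (M : structure L) n (s : automorphism M)
  (U : ('I_n -> M) -> Prop) (I : int -> Prop) : Prop :=
  exists a : 'I_n -> M, forall k, I k <-> xi s U a k.

(* Theta = orbit of {i | i <= 0} under the shift, i.e. all {i | i <= k} *)
Definition in_Theta (I : int -> Prop) : Prop :=
  exists k : int, forall i, I i <-> (i <= k)%R.
Definition is_bar0 (I : int -> Prop) : Prop := forall i, ~ I i.
Definition is_bar1 (I : int -> Prop) : Prop := forall i, I i.

Definition xi_Theta_shape (L : language) (M : structure L) n
  (s : automorphism M) (U : ('I_n -> M) -> Prop) : Prop :=
  (forall I, in_Theta I -> in_xi_image s U I) /\
  (forall I, in_xi_image s U I -> in_Theta I \/ is_bar0 I \/ is_bar1 I).

(* (sigma^k(b))_{k in Z} is an (order-)indiscernible sequence (over the empty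
   set): for every N, every formula psi(z_1,...,z_N) in N m-tuples of variables
   (the map g says which coordinate of which tuple each variable of psi is),
   and every i_1 < ... < i_N, j_1 < ... < j_N in Z,
   M |= psi(sigma^{i_1} b, ...) <-> M |= psi(sigma^{j_1} b, ...). *)
Definition in_W (L : language) (M : structure L) m (b : 'I_m -> M)
  (s : automorphism M) : Prop :=
  forall (N p : nat) (psi : formula L p) (g : 'I_p -> 'I_N * 'I_m)
         (i j : 'I_N -> int),
    (forall u v : 'I_N, (u < v)%N -> (i u < i v)%R) ->
    (forall u v : 'I_N, (u < v)%N -> (j u < j v)%R) ->
    (sat (fun x => aut_pow s (i (g x).1) (b (g x).2)) psi <->
     sat (fun x => aut_pow s (j (g x).1) (b (g x).2)) psi).

(* (2) => (1) by iterating sigma on b, and (2) <=> (3) because U <= sigma(U) says that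
   every xi_{sigma,U}(a) is a down-closed set of integers, i.e. an element of Theta, the
   empty set or Z, while a point of sigma(U) \ U realizes {i <= 0}.
   The content is (1) => (4): from a strict chain phi(M,b_i) we build a model with an
   automorphism shifting an indiscernible copy of the b_i.  Ramsey's theorem makes any
   finitely many colourings of increasing tuples homogeneous on a subsequence; along an
   ultrafilter on these finite requirements we take the ultralimit of the subsequences,
   whose elements are functions of the sequence reading finitely many of its terms.
   Los's theorem (quantifiers via Skolem functions of M) makes it a model of T,
   homogeneity makes the limit sequence indiscernible, so shifting it is an
   automorphism, and the strictness of the chain survives. *)

From mathcomp Require Import all_boot all_order all_algebra zify.
From mathcomp Require Import boolp classical_sets filter.
From Stdlib Require Import ClassicalEpsilon.

Set Implicit Arguments.
Unset Strict Implicit.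
Unset Printing Implicit Defensive.
Import Order.TTheory GRing.Theory Num.Theory.

Local Open Scope classical_set_scope.

(** * Automorphisms and the sets xi *)

Lemma strict_subset_iff (A : Type) (U U' V V' : A -> Prop) :
  (forall a, U a <-> U' a) -> (forall a, V a <-> V' a) ->
  strict_subset U V -> strict_subset U' V'.
Proof.
move=> EU EV [sub [w [Vw nUw]]]; split; first by move=> a /EU /sub /EV.
by exists w; split; [apply/EV | rewrite -EU].
Qed.

Section StrictChain.
Variables (A : Type) (S : nat -> A -> Prop).
Hypothesis chain : forall i, strict_subset (S i) (S i.+1).

Lemma strict_chain_le i j : i <= j -> forall a, S i a -> S j a.
Proof.
apply: (homo_leq (r := fun U V => forall a, U a -> V a)) => // [U V W UV VW a /UV /VW //|k].
exact: (chain k).1.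
Qed.

Lemma strict_chain_witness i j : i < j -> exists a, S j a /\ ~ S i a.
Proof.
move=> ij; have [_ [a [Sa nSa]]] := chain i; exists a; split=> //.
exact: strict_chain_le ij _ Sa.
Qed.

End StrictChain.

Section AutomorphismInvariance.
Variables (L : language) (M : structure L) (s : automorphism M).

Lemma tact_scons (f : M -> M) n (x : M) (v : 'I_n -> M) :
  tact f (scons x v) = scons (f x) (tact f v).
Proof. by apply: funext => i; rewrite /tact /scons; case: unlift. Qed.

Lemma tact_env2 (f : M -> M) n m (a : 'I_n -> M) (b : 'I_m -> M) :
  tact f (env2 a b) = env2 (tact f a) (tact f b).
Proof. by apply: funext => k; rewrite /tact /env2; case: split. Qed.

Lemma tact_autK n : cancel (@tact L M n s) (tact (aut_inv s)).
Proof. by move=> a; apply: funext => i; rewrite /tact aut_funK. Qed.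

Lemma tact_autVK n : cancel (@tact L M n (aut_inv s)) (tact s).
Proof. by move=> a; apply: funext => i; rewrite /tact aut_invK. Qed.

Lemma aut_teval n (v : 'I_n -> M) t : s (teval v t) = teval (tact s v) t.
Proof.
elim: t => [i|f ts IH] //=; rewrite aut_fun_hom; congr interp_fun.
exact: funext.
Qed.

Lemma sat_aut n (psi : formula L n) (v : 'I_n -> M) :
  sat v psi <-> sat (tact s v) psi.
Proof.
elim: psi v => {n} //=.
- move=> n t1 t2 v; rewrite -!aut_teval.
  by split=> [-> // | /(can_inj (aut_funK s))].
- move=> n r ts v; rewrite (aut_rel_hom s).
  suff -> : (fun i => s (teval v (ts i))) = (fun i => teval (tact s v) (ts i))
    by [].
  by apply: funext => i; exact: aut_teval.
- by move=> n p IH v; rewrite IH.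
- by move=> n p IHp q IHq v; rewrite IHp IHq.
- by move=> n p IHp q IHq v; rewrite IHp IHq.
- by move=> n p IHp q IHq v; rewrite IHp IHq.
- move=> n p IH v; split=> -[x hx].
    by exists (s x); rewrite -tact_scons -IH.
  by exists (aut_inv s x); rewrite IH tact_scons aut_invK.
- move=> n p IH v; split=> hx x.
    by move: (hx (aut_inv s x)); rewrite IH tact_scons aut_invK.
  by rewrite IH tact_scons.
Qed.

Lemma aut_imageE n (U : ('I_n -> M) -> Prop) a :
  aut_image s U a <-> U (tact (aut_inv s) a).
Proof.
split=> [[a' [Ua' E]] | Ua].
  by rewrite (_ : a = tact s a') ?tact_autK //; apply: funext.
by exists (tact (aut_inv s) a); split=> // i; rewrite /tact aut_invK.
Qed.

Variables (n m : nat) (phi : formula L (n + m)).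

Lemma defset_aut (b : 'I_m -> M) a :
  defset phi (tact s b) a <-> defset phi b (tact (aut_inv s) a).
Proof. by rewrite /defset [X in _ <-> X](sat_aut phi) tact_env2 tact_autVK. Qed.

Lemma aut_image_defset (b : 'I_m -> M) a :
  aut_image s (defset phi b) a <-> defset phi (tact s b) a.
Proof. by rewrite aut_imageE defset_aut. Qed.

Lemma strict_defset_aut (b1 b2 : 'I_m -> M) :
  strict_subset (defset phi b1) (defset phi b2) ->
  strict_subset (defset phi (tact s b1)) (defset phi (tact s b2)).
Proof.
move=> [sub [w [w2 nw1]]]; split=> [a|]; first by rewrite !defset_aut => /sub.
by exists (tact s w); rewrite !defset_aut tact_autK.
Qed.

Lemma aut_image_strict_chain (b : 'I_m -> M) :
  strict_subset (defset phi b) (aut_image s (defset phi b)) ->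
  forall i, strict_subset (defset phi (tact (iter i s) b))
                          (defset phi (tact (iter i.+1 s) b)).
Proof.
move=> sb; elim=> [|i IH]; last exact: strict_defset_aut IH.
by apply: strict_subset_iff sb => // a; rewrite aut_image_defset.
Qed.

End AutomorphismInvariance.

Section DownClosed.
Variable I : int -> Prop.
Local Open Scope ring_scope.

Lemma int_boundary k0 (d : nat) : I k0 -> ~ I (k0 + d%:Z) -> exists K, I K /\ ~ I (K + 1).
Proof.
elim: d k0 => [|d IH] k0 Ik0; first by rewrite addr0.
have [Ik1 | nIk1] := EM (I (k0 + 1)); last by exists k0.
by rewrite (_ : k0 + d.+1%:Z = k0 + 1 + d%:Z); [exact: IH | lia].
Qed.

Lemma down_closed_shape :
  (forall k k', k' <= k -> I k -> I k') -> in_Theta I \/ is_bar0 I \/ is_bar1 I.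
Proof.
move=> down; have [bar0 | /existsNP[k0 /contrapT Ik0]] := EM (is_bar0 I); first by right; left.
have [bar1 | /existsNP[k1 nIk1]] := EM (is_bar1 I); first by right; right.
left; have lt01 : k0 < k1.
  by rewrite ltNge; apply/negP => le10; exact: nIk1 (down k0 _ le10 Ik0).
have [K [IK nIK]] : exists K, I K /\ ~ I (K + 1).
  by apply: (@int_boundary k0 (absz (k1 - k0)) Ik0); rewrite (_ : _ + _ = k1) //; lia.
exists K => i; split=> [Ii | /down]; last exact.
by rewrite leNgt; apply/negP => Ki; apply: nIK (down i _ _ Ii); lia.
Qed.

End DownClosed.

Section Powers.
Variables (L : language) (M : structure L) (s : automorphism M).
Local Open Scope ring_scope.

Lemma aut_powD1 k x : aut_pow s (k + 1) x = s (aut_pow s k x).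
Proof.
case: k => [p | [|q]]; first by rewrite (_ : Posz p + 1 = p.+1) //; lia.
  by rewrite (_ : Negz 0 + 1 = 0) /= ?aut_invK // NegzE; lia.
by rewrite (_ : Negz q.+1 + 1 = Negz q) /= ?aut_invK // !NegzE; lia.
Qed.

Lemma aut_powB1 k x : aut_pow s (k - 1) x = aut_inv s (aut_pow s k x).
Proof. by rewrite -[in RHS](subrK 1 k) aut_powD1 aut_funK. Qed.

Lemma aut_powD k l x : aut_pow s k (aut_pow s l x) = aut_pow s (k + l) x.
Proof.
elim/int_ind: k => [|p IH|p IH]; first by rewrite add0r.
  by rewrite (_ : p.+1%:Z + l = p%:Z + l + 1) ?aut_powD1 -?IH //; lia.
rewrite (_ : - p.+1%:Z = - p%:Z - 1) ?aut_powB1 ?IH; last by lia.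
by rewrite -aut_powB1 (_ : - p%:Z - 1 + l = - p%:Z + l - 1) //; lia.
Qed.

End Powers.

Section XiShape.
Variables (L : language) (M : structure L) (s : automorphism M).
Variables (n : nat) (U : ('I_n -> M) -> Prop).
Local Open Scope ring_scope.

Lemma xi_tact_pow l a k : xi s U (tact (aut_pow s l) a) k = xi s U a (k + l).
Proof. by congr U; apply: funext => i; rewrite /tact aut_powD. Qed.

Lemma xi_down_closed : (forall a, U a -> aut_image s U a) ->
  forall a k k', k' <= k -> xi s U a k -> xi s U a k'.
Proof.
move=> sub a.
have xiB1 k : xi s U a k -> xi s U a (k - 1).
  move=> /sub /aut_imageE; congr U; apply: funext => i; exact/esym/aut_powB1.
have xiBn (d : nat) k : xi s U a k -> xi s U a (k - d%:Z).
  elim: d k => [|d IH] k; first by rewrite subr0.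
  by move=> /IH /xiB1; rewrite (_ : k - d.+1%:Z = k - d%:Z - 1) //; lia.
by move=> k k' le /(xiBn (absz (k - k'))); rewrite (_ : k - _ = k') //; lia.
Qed.

Lemma xi_Theta_shape_of_strict :
  strict_subset U (aut_image s U) -> xi_Theta_shape s U.
Proof.
move=> [sub [y [/aut_imageE Uy' nUy]]]; have down := xi_down_closed sub.
set y' := tact (aut_inv s) y in Uy'.
have xiy k : xi s U y' k <-> k <= 0.
  split=> [xik | /down]; last by apply.
  rewrite leNgt; apply/negP => pos; apply: nUy.
  have : xi s U y' 1 by apply: down xik; lia.
  by rewrite -[y](tact_autVK s).
split=> [I [K HK] | I [a Ha]].
  exists (tact (aut_pow s (- K)) y') => k.
  by rewrite HK xi_tact_pow xiy subr_le0.
by apply: down_closed_shape => k k' le /Ha /(down a _ _ le) /Ha.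
Qed.

Lemma strict_of_xi_Theta_shape :
  xi_Theta_shape s U -> strict_subset U (aut_image s U).
Proof.
move=> [inTheta shape].
have [a Ha] : in_xi_image s U (fun i => i <= 0) by apply: inTheta; exists 0.
split=> [b Ub | ].
  apply/aut_imageE; rewrite (_ : tact _ b = tact (aut_pow s (-1)) b) //.
  have [[K HK] | [/(_ 0) | /(_ (-1))]] := shape _ (ex_intro _ b (fun k => iff_refl _));
    [|by []|by []].
  by apply/HK; apply: le_trans ((HK 0).1 Ub).
exists (tact s a); split; first by apply/aut_imageE; rewrite tact_autK; exact: (Ha 0).1.
by move=> xi1; have /Ha : xi s U a 1 by [].
Qed.

End XiShape.

(** * Infinite Ramsey theorem *)

Definition increasing N (s : 'I_N -> nat) := forall x y : 'I_N, x < y -> s x < s y.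
Definition unbounded (A : set nat) := forall n, exists2 x, n <= x & A x.
Definition homogeneous N (c : ('I_N -> nat) -> Prop) (A : set nat) :=
  forall s t, increasing s -> increasing t ->
    (forall x, A (s x)) -> (forall x, A (t x)) -> (c s <-> c t).

Definition fcons N (x : nat) (s : 'I_N -> nat) : 'I_N.+1 -> nat :=
  fun k => if unlift ord0 k is Some j then s j else x.
Definition fbehead N (t : 'I_N.+1 -> nat) : 'I_N -> nat := fun j => t (lift ord0 j).

Lemma fcons_behead N (t : 'I_N.+1 -> nat) : fcons (t ord0) (fbehead t) = t.
Proof. by apply: funext => k; rewrite /fcons /fbehead; case: unliftP => [j|] ->. Qed.

Lemma increasing_behead N (t : 'I_N.+1 -> nat) :
  increasing t -> increasing (fbehead t).
Proof. by move=> It x y xy; apply: It; rewrite /= /bump /= !add1n ltnS. Qed.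

Lemma homogeneous_sub N (c : ('I_N -> nat) -> Prop) (A B : set nat) :
  B `<=` A -> homogeneous c A -> homogeneous c B.
Proof. by move=> BA hA s t Is It Bs Bt; apply: hA => // x; apply: BA. Qed.

Lemma unbounded_or_co (P : set nat) : unbounded P \/ unbounded (~` P).
Proof.
have [|nP] := EM (unbounded P); [by left | right].
have [n Hn] : exists n, forall x, n <= x -> ~ P x.
  apply: contrapT => h; apply: nP => n; apply: contrapT => hn.
  by apply: h; exists n => x nx Px; apply: hn; exists x.
by move=> k; exists (maxn k n); [exact: leq_maxl | apply: Hn; exact: leq_maxr].
Qed.

Section RamseyStep.
Variable N : nat.
Hypothesis ramseyN : forall (c : ('I_N -> nat) -> Prop) (A : set nat),
  unbounded A -> exists2 B, B `<=` A & unbounded B /\ homogeneous c B.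
Variable c : ('I_N.+1 -> nat) -> Prop.

Lemma ramsey_thin (S : set nat) : unbounded S ->
  exists x (B : set nat), [/\ S x, B `<=` [set y | S y /\ x < y], unbounded B
                            & homogeneous (fun s => c (fcons x s)) B].
Proof.
move=> unbS; have [x _ Sx] := unbS 0.
have unbS' : unbounded [set y | S y /\ x < y].
  move=> k; have [y ky Sy] := unbS (maxn k x.+1).
  exists y; first exact: leq_trans (leq_maxl _ _) ky.
  by split; last exact: leq_trans (leq_maxr _ _) ky.
have [B BS [unbB hB]] := ramseyN (fun s => c (fcons x s)) unbS'.
by exists x, B.
Qed.

Lemma ramsey_diagonal (A : set nat) : unbounded A ->
  exists (x : nat -> nat) (S : nat -> set nat),
    [/\ forall k, A (x k), forall k, x k < x k.+1,
        forall k j, k < j -> S k (x j)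
      & forall k, homogeneous (fun s => c (fcons (x k) s)) (S k)].
Proof.
move=> unbA; pose ust := {S : set nat | unbounded S}.
pose thinning (S : ust) (p : nat * ust) :=
  [/\ sval S p.1, sval p.2 `<=` [set y | sval S y /\ p.1 < y]
     & homogeneous (fun s => c (fcons p.1 s)) (sval p.2)].
have [next nextP] : exists next : ust -> nat * ust, forall S, thinning S (next S).
  apply: choice => -[S unbS].
  have [x [B [Sx BS unbB hB]]] := ramsey_thin unbS.
  by exists (x, exist _ B unbB).
pose Sq k := iter k (fun S => (next S).2) (exist _ A unbA).
pose x k := (next (Sq k)).1.
have xS k : sval (Sq k) (x k) by case: (nextP (Sq k)).
have Snext k y : sval (Sq k.+1) y -> sval (Sq k) y /\ x k < y.
  by case: (nextP (Sq k)) => _ + _; apply.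
have Sq_dec k j : k <= j -> sval (Sq j) `<=` sval (Sq k).
  elim: j => [|j IH]; first by rewrite leqn0 => /eqP ->.
  by rewrite leq_eqVlt => /orP [/eqP -> // | /IH sub y /Snext [/sub]].
exists x, (fun k => sval (Sq k.+1)); split=> [k | k | k j kj | k].
- exact: Sq_dec (leq0n k) _ (xS k).
- exact: (Snext k _ (xS k.+1)).2.
- exact: Sq_dec kj _ (xS j).
- by case: (nextP (Sq k)).
Qed.

End RamseyStep.

Theorem ramsey N (c : ('I_N -> nat) -> Prop) (A : set nat) : unbounded A ->
  exists2 B, B `<=` A & unbounded B /\ homogeneous c B.
Proof.
elim: N c A => [|N IH] c A unbA.
  by exists A => //; split=> // s t _ _ _ _; rewrite (_ : s = t) //; apply: funext => -[].
have [x [S [Ax xS xlater hS]]] := ramsey_diagonal IH c unbA.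
have xinc : {homo x : i j / i < j} := homo_ltn ltn_trans xS.
have xge k : k <= x k by elim: k => // k IHk; exact: leq_ltn_trans IHk (xS k).
have xrefl k k' : x k < x k' -> k < k'.
  by move=> lt; rewrite ltnNge; apply/negP => /(ltnW_homo xinc); rewrite leqNgt lt.
pose col k := c (fcons (x k) (fun i : 'I_N => x (k.+1 + i))).
have colP k t : increasing t -> (forall i, S k (t i)) -> c (fcons (x k) t) <-> col k.
  move=> It St; apply: hS => // [i j ij | i]; first by apply: xinc; rewrite ltn_add2l.
  by apply: xlater; rewrite ltnS leq_addr.
have finish (K : set nat) (b : Prop) : unbounded K -> (forall k, K k -> col k <-> b) ->
    exists2 B, B `<=` A & unbounded B /\ homogeneous c B.
  move=> unbK Kb; exists [set y | exists2 k, K k & y = x k]; first by move=> _ [k _ ->].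
  split=> [n | ].
    by have [k nk Kk] := unbK n; exists (x k); [exact: leq_trans nk (xge k) | exists k].
  suff key t : increasing t -> (forall i, exists2 k, K k & t i = x k) -> c t <-> b.
    by move=> s t Is It Bs Bt; rewrite (key s Is Bs) (key t It Bt).
  move=> It Bt; have [k Kk tk] := Bt ord0.
  rewrite -(fcons_behead t) tk colP ?Kb //; first exact: increasing_behead.
  move=> j; have [k' _ tk'] := Bt (lift ord0 j); rewrite /fbehead tk'.
  by apply: xlater; apply: xrefl; rewrite -tk' -tk; apply: It.
have [unb | unb] := unbounded_or_co col.
  by apply: (finish _ True unb) => k.
by apply: (finish _ False unb) => k nck; split.
Qed.

Definition colouring := {N : nat & ('I_N -> nat) -> Prop}.

Lemma ramsey_seq (l : seq colouring) :
  exists2 B, unbounded B & forall k, List.In k l -> homogeneous (projT2 k) B.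
Proof.
elim: l => [|k l [B unbB hB]]; first by exists setT => // n; exists n.
have [B' B'B [unbB' hB']] := ramsey (projT2 k) unbB.
by exists B' => // k' [<- // | /hB]; apply: homogeneous_sub.
Qed.

Lemma unbounded_enum (B : set nat) : unbounded B ->
  exists2 e : nat -> nat, {homo e : i j / i < j} & forall i, B (e i).
Proof.
move=> unbB.
have [next nextP] : exists next : nat -> nat, forall y, y < next y /\ B (next y).
  apply: (@choice _ _ (fun y x => y < x /\ B x)) => y.
  by have [x yx Bx] := unbB y.+1; exists x.
exists (fun k => iter k.+1 next 0) => [|i]; last exact: (nextP _).2.
exact: homo_ltn ltn_trans (fun k => (nextP _).1).
Qed.

Lemma ramsey_enum (l : seq colouring) :
  exists2 e : nat -> nat, {homo e : i j / i < j} &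
    forall k, List.In k l -> forall s t, increasing s -> increasing t ->
      (projT2 k (e \o s) <-> projT2 k (e \o t)).
Proof.
have [B unbB hB] := ramsey_seq l; have [e einc eB] := unbounded_enum unbB.
exists e => // k kl s t Is It.
by apply: (hB k kl) => [x y /Is | x y /It | x | x];
  [apply: einc | apply: einc | apply: eB | apply: eB].
Qed.

(** * Ultrafilters *)

Lemma ultrafilter_cofinal (I : Type) (le : I -> I -> Prop) (i0 : I) :
  (forall a, le a a) -> (forall a b c, le a b -> le b c -> le a c) ->
  (forall a b, exists c, le a c /\ le b c) ->
  exists2 F : set_system I, UltraFilter F & forall a, F (le a).
Proof.
move=> le_refl le_trans le_dir.
have cones : ProperFilter (filter_from setT le).
  apply: filter_from_proper => [|a _]; last by exists a.
  apply: filter_from_filter => [|a b _ _]; first by exists i0.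
  have [c [ac bc]] := le_dir a b.
  by exists c => // x cx; split; [exact: le_trans ac cx | exact: le_trans bc cx].
have [F [FU sub]] := ultraFilterLemma cones.
by exists F => // a; apply: sub; exists a.
Qed.

Lemma fmap_ultra (T V : Type) (f : T -> V) (F : set_system T) :
  UltraFilter F -> UltraFilter (fmap f F).
Proof.
move=> FU; split=> [|G PG sub]; first exact: fmap_proper_filter.
apply: funext => A; apply: propext; split=> [GA | /sub //].
have [// | FnA] := in_ultra_setVsetC (f @^-1` A) FU.
have GnA : G (~` A) by apply: sub.
by case: (filter_not_empty G); rewrite -(setICr A); apply: filterI.
Qed.

Section UltraFilterLogic.
Context {I : Type} (F : set_system I) {FU : UltraFilter F}.

Lemma filter_iff (C A B : set I) :
  F C -> (forall u, C u -> (A u <-> B u)) -> (F A <-> F B).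
Proof.
by move=> FC AB; split=> FX; apply: (filterS2 _ _ FC FX) => u /AB; [move=> -> | move=> <-].
Qed.

Lemma ultra_not (A : set I) : F (fun u => ~ A u) <-> ~ F A.
Proof.
split=> [FnA FA | nFA]; last by case: (in_ultra_setVsetC A FU).
by apply: (filter_not_empty F); apply: (filterS2 _ _ FnA FA) => u.
Qed.

Lemma ultra_and (A B : set I) : F (fun u => A u /\ B u) <-> F A /\ F B.
Proof.
split=> [FAB | [FA FB]]; last exact: (filterS2 _ (fun u a b => conj a b) FA FB).
by split; apply: filterS FAB => u [].
Qed.

Lemma ultra_or (A B : set I) : F (fun u => A u \/ B u) <-> F A \/ F B.
Proof.
split=> [FAB | [FA | FB]]; last 2 first.
- by apply: filterS FA => u; left.
- by apply: filterS FB => u; right.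
apply: contrapT => /not_orP[/ultra_not nFA /ultra_not nFB].
by apply: (filter_not_empty F); apply: (filterS3 _ _ FAB nFA nFB) => u [].
Qed.

Lemma ultra_imp (A B : set I) : F (fun u => A u -> B u) <-> (F A -> F B).
Proof.
split=> [FAB FA | FAB]; first exact: (filterS2 _ (fun u f => f) FAB FA).
have [FA | FnA] := in_ultra_setVsetC A FU.
  by apply: filterS (FAB FA) => u Bu _.
by apply: filterS FnA.
Qed.

End UltraFilterLogic.

(** * The ultralimit of a strict chain *)

Lemma sval_inj (A : Type) (P : A -> Prop) : injective (@sval A P).
Proof. by move=> [a p] [b q] /= ab; exact: eq_exist. Qed.

(* A stage of the construction: finitely many colourings to make homogeneous at once,
   and the radius of the window of the sequence that has to be read increasingly. *)
Definition index := (seq colouring * nat)%type.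
Definition index_le (a b : index) :=
  (forall k, List.In k a.1 -> List.In k b.1) /\ a.2 <= b.2.

Definition zincreasing N (i : 'I_N -> int) := forall x y : 'I_N, x < y -> (i x < i y)%R.

Section UltraLimit.
Variables (L : language) (M : structure L) (m : nat) (bs : nat -> 'I_m -> M).
Variables (U : set_system index) (e : index -> nat -> nat).
Context {U_ultra : UltraFilter U}.
Hypothesis U_cofinal : forall a, U (index_le a).
Hypothesis e_incr : forall u, {homo e u : i j / i < j}.
Hypothesis e_homogeneous : forall (u : index) (k : colouring), List.In k u.1 ->
  forall s t : 'I_(projT1 k) -> nat, increasing s -> increasing t ->
  (projT2 k (e u \o s) <-> projT2 k (e u \o t)).

Local Open Scope ring_scope.

Definition zseq := int -> 'I_m -> M.
(* [absz] is only a device to land in [nat]: on the window [|z| <= u.2] that local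
   functions read for large [u], the sample is [z |-> bs (e u (z + u.2))]. *)
Definition sample (u : index) : zseq := fun z => bs (e u (absz (z + u.2%:Z))).
Definition almost : set_system zseq := fmap sample U.
#[local] Instance almost_ultra : UltraFilter almost := fmap_ultra sample U_ultra.

Lemma almost_sample (P : zseq -> Prop) : (forall u, P (sample u)) -> almost P.
Proof. exact: filterE. Qed.

Definition agree (R : nat) (w w' : zseq) := forall z, (absz z <= R)%N -> w z = w' z.
Definition local (A : Type) (f : zseq -> A) :=
  exists R, forall w w', agree R w w' -> f w = f w'.

Lemma local_comp (A B : Type) (f : zseq -> A) (h : A -> B) : local f -> local (h \o f).
Proof. by move=> [R fR]; exists R => w w' /fR /= ->. Qed.

Lemma local_tuple (A : Type) k (f : 'I_k -> zseq -> A) :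
  (forall i, local (f i)) -> local (fun w i => f i w).
Proof.
move=> /choice[R fR]; exists (\max_i R i)%N => w w' ag; apply: funext => i.
by apply: fR => z zR; apply: ag; exact: leq_trans zR (leq_bigmax i).
Qed.

Lemma local_pair (A B : Type) (f : zseq -> A) (g : zseq -> B) :
  local f -> local g -> local (fun w => (f w, g w)).
Proof.
move=> [R fR] [R' gR]; exists (maxn R R') => w w' ag.
by rewrite (fR w w') ?(gR w w') // => z zR; apply: ag; lia.
Qed.

Definition zshift (d : int) (w : zseq) : zseq := fun z => w (z + d).

Lemma local_zshift (A : Type) d (f : zseq -> A) : local f -> local (f \o zshift d).
Proof. by move=> [R fR]; exists (R + absz d)%N => w w' ag; apply: fR => z zR; apply: ag; lia. Qed.

(* The ultralimit has as elements the classes, modulo agreement on U-almost all samples,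
   of the functions of the sequence that read only finitely many of its terms. *)
Definition lfun := {f : zseq -> M | local f}.
Definition lequiv (t t' : lfun) := almost (fun w => sval t w = sval t' w).

Lemma lequiv_refl t : lequiv t t.
Proof. exact: filterE. Qed.

Lemma lequiv_sym t t' : lequiv t t' -> lequiv t' t.
Proof. exact: filterS. Qed.

Lemma lequiv_trans t1 t2 t3 : lequiv t1 t2 -> lequiv t2 t3 -> lequiv t1 t3.
Proof. by move=> h1 h2; apply: (filterS2 _ _ h1 h2) => u -> ->. Qed.

Definition lclass := {C : lfun -> Prop | exists t, C = lequiv t}.
Definition cls (t : lfun) : lclass := exist _ (lequiv t) (ex_intro _ t erefl).
Definition rep (x : lclass) : lfun := projT1 (cid (svalP x)).
Definition ev (x : lclass) : zseq -> M := sval (rep x).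
Definition evs k (v : 'I_k -> lclass) (w : zseq) : 'I_k -> M := fun i => ev (v i) w.

Lemma cls_rep_equiv x : sval x = lequiv (rep x).
Proof. exact: projT2 (cid (svalP x)). Qed.

Lemma cls_eq t t' : lequiv t t' -> cls t = cls t'.
Proof.
move=> tt'; apply: sval_inj; apply: funext => s; apply: propext.
by split; apply: lequiv_trans; [exact: lequiv_sym | ].
Qed.

Lemma clsK x : cls (rep x) = x.
Proof. by apply: sval_inj; rewrite /= -cls_rep_equiv. Qed.

Lemma ev_cls t : almost (fun w => ev (cls t) w = sval t w).
Proof.
change (lequiv (rep (cls t)) t); rewrite -(cls_rep_equiv (cls t)).
exact: lequiv_refl.
Qed.

Lemma lclass_eqE (x y : lclass) : x = y <-> lequiv (rep x) (rep y).
Proof.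
split=> [-> | /cls_eq]; first exact: lequiv_refl.
by rewrite !clsK.
Qed.

Lemma evs_cls k (f : 'I_k -> lfun) :
  almost (fun w => evs (cls \o f) w = (fun i => sval (f i) w)).
Proof. by apply: filterS (filter_forall _ (fun i => ev_cls (f i))) => w /funext. Qed.

Definition lconst : lfun := exist _ (fun _ => inhabitant M) (ex_intro _ 0%N (fun _ _ _ => erefl)).

Definition lapp k (h : ('I_k -> M) -> M) (ts : 'I_k -> lfun) : lfun :=
  exist _ (fun w => h (fun i => sval (ts i) w))
          (local_comp h (local_tuple (fun i => svalP (ts i)))).

Definition ulim : structure L :=
  @Structure L lclass (cls lconst)
    (fun f args => cls (lapp (@interp_fun L M f) (rep \o args)))
    (fun r args => almost (fun w => @interp_rel L M r (evs args w))).

Lemma teval_lim p (v : 'I_p -> ulim) (t : term L p) :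
  almost (fun w => ev (teval v t) w = teval (evs v w) t).
Proof.
elim: t => [i | f ts IH] /=; first exact: lequiv_refl.
pose t := lapp (@interp_fun L M f) (rep \o (fun i => teval v (ts i))).
apply: (filterS2 _ _ (ev_cls t) (filter_forall _ IH)) => w -> /= IHw.
by congr interp_fun; apply: funext => i; exact: IHw.
Qed.

Lemma teval_lim_tuple p k (ts : 'I_k -> term L p) (v : 'I_p -> ulim) :
  almost (fun w => evs (fun i => teval v (ts i)) w = (fun i => teval (evs v w) (ts i))).
Proof.
apply: filterS (filter_forall _ (fun i => teval_lim v (ts i))) => w h.
exact: funext.
Qed.

Definition skolem p (psi : formula L p.+1) (v : 'I_p -> M) : M :=
  epsilon (inhabits (inhabitant M)) (fun y => sat (scons y v) psi).

Lemma skolemP p (psi : formula L p.+1) v :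
  (exists y, sat (scons y v) psi) -> sat (scons (skolem psi v) v) psi.
Proof. exact: epsilon_spec. Qed.

Definition lskolem p (psi : formula L p.+1) (v : 'I_p -> ulim) : ulim :=
  cls (lapp (skolem psi) (rep \o v)).

Lemma ev_lskolem p (psi : formula L p.+1) (v : 'I_p -> ulim) :
  almost (fun w => ev (lskolem psi v) w = skolem psi (evs v w)).
Proof. exact: ev_cls (lapp (skolem psi) (rep \o v)). Qed.

Lemma evs_scons p (x : ulim) (v : 'I_p -> ulim) w :
  evs (scons x v) w = scons (ev x w) (evs v w).
Proof. by apply: funext => i; rewrite /evs /scons; case: unlift. Qed.

Section LosQuantifiers.
Variables (p : nat) (q : formula L p.+1).
Hypothesis los_q : forall v : 'I_p.+1 -> ulim,
  sat v q <-> almost (fun w => sat (evs v w) q).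

Lemma los_ex (v : 'I_p -> ulim) :
  (exists x, sat (scons x v) q) <-> almost (fun w => exists y, sat (scons y (evs v w)) q).
Proof.
split=> [[x /los_q] | h].
  by apply: filterS => w; rewrite evs_scons; exists (ev x w).
exists (lskolem q v); apply/los_q.
apply: (filterS2 _ _ h (ev_lskolem q v)) => w /skolemP + E.
by rewrite evs_scons E.
Qed.

Lemma los_all (v : 'I_p -> ulim) :
  (forall x, sat (scons x v) q) <-> almost (fun w => forall y, sat (scons y (evs v w)) q).
Proof.
split=> [h | h x]; last by apply/los_q; apply: filterS h => w; rewrite evs_scons.
apply: contrapT => /(iffRL (ultra_not _)) nall.
pose x := lskolem (Fneg q) v.
have : almost (fun w => ~ sat (evs (scons x v) w) q).
  apply: (filterS2 _ _ nall (ev_lskolem (Fneg q) v)) => w nallw E.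
  rewrite evs_scons E; apply: (@skolemP p (Fneg q)).
  exact/existsNP.
by move/(iffLR (ultra_not _)); apply; apply/los_q.
Qed.

End LosQuantifiers.

Theorem los p (psi : formula L p) (v : 'I_p -> ulim) :
  sat v psi <-> almost (fun w => sat (evs v w) psi).
Proof.
elim: psi v => {p} /=.
- by move=> p v; split=> // _; exact: filterT.
- by move=> p v; split=> // /(filter_not_empty U).
- move=> p t1 t2 v; rewrite lclass_eqE.
  by apply: (filter_iff (filterI (teval_lim v t1) (teval_lim v t2))) => w []; rewrite /ev => -> ->.
- move=> p r ts v; apply: filter_iff (teval_lim_tuple ts v) _ => w /= E.
  by rewrite -E.
- by move=> p q IH v; rewrite IH ultra_not.
- by move=> p q IHq r IHr v; rewrite IHq IHr ultra_and.
- by move=> p q IHq r IHr v; rewrite IHq IHr ultra_or.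
- by move=> p q IHq r IHr v; rewrite IHq IHr ultra_imp.
- by move=> p q IH v; apply: los_ex.
- by move=> p q IH v; apply: los_all.
Qed.

Lemma ulim_model (T : theory L) : is_model T M -> is_model T ulim.
Proof.
move=> MT s Ts; rewrite /satS los; apply: filterE => w.
have -> : evs (@no_vars L ulim) w = @no_vars L M by apply: funext => -[].
exact: MT.
Qed.

Lemma almost_indiscernible N (Q : ('I_N -> 'I_m -> M) -> Prop) (i j : 'I_N -> int) :
  zincreasing i -> zincreasing j ->
  almost (fun w => Q (w \o i)) <-> almost (fun w => Q (w \o j)).
Proof.
move=> Ii Ij; pose kap : colouring := existT _ N (fun s : 'I_N -> nat => Q (bs \o s)).
pose B := (\max_k (absz (i k) + absz (j k)))%N.
have hB k : (absz (i k) + absz (j k) <= B)%N by exact: leq_bigmax.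
apply: (@filter_iff _ U _ _ _ _ (U_cofinal ([:: kap], B))) => -[l r] [/= kl rB].
have shifted (h : 'I_N -> int) : zincreasing h -> (forall k, absz (h k) <= B)%N ->
    increasing (fun k => absz (h k + r%:Z)).
  by move=> Ih hh x y xy; have := Ih x y xy; have := hh x; have := hh y; lia.
have bi k : (absz (i k) <= B)%N by apply: leq_trans (hB k); exact: leq_addr.
have bj k : (absz (j k) <= B)%N by apply: leq_trans (hB k); exact: leq_addl.
exact: (@e_homogeneous (l, r) kap (kl kap (or_introl erefl)) _ _
          (shifted i Ii bi) (shifted j Ij bj)).
Qed.

Lemma zshift0 w : zshift 0 w = w.
Proof. by apply: funext => z; rewrite /zshift addr0. Qed.

Lemma almost_zshift d (P : zseq -> Prop) : local P -> almost P <-> almost (P \o zshift d).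
Proof.
move=> [R PR]; pose N := (R + R).+1.
(* P reads the window of radius R, and the windows around 0 and around d are both
   increasing tuples of indices, so [almost_indiscernible] identifies them. *)
pose window (c : int) (k : 'I_N) := k%:Z - R%:Z + c.
have window_incr c : zincreasing (window c) by move=> x y xy; rewrite /window; lia.
pose ext (v : 'I_N -> 'I_m -> M) : zseq := fun z => v (inord (absz (z + R%:Z))).
have shift_window c : P \o zshift c = (fun w => P (ext (w \o window c))).
  apply: funext => w; apply: PR => z zR; rewrite /ext /window /zshift /= inordK.
    by congr w; lia.
  by lia.
have P0 : P \o zshift 0 = P by apply: funext => w /=; rewrite zshift0.
rewrite -{1}P0 !shift_window.
exact: (almost_indiscernible (fun v => P (ext v)) (window_incr 0) (window_incr d)).
Qed.

Definition lshift (d : int) (t : lfun) : lfun :=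
  exist _ (sval t \o zshift d) (local_zshift d (svalP t)).

Lemma lshift0 t : lshift 0 t = t.
Proof. by apply: sval_inj; apply: funext => w /=; rewrite zshift0. Qed.

Lemma lshiftD d d' t : lshift d (lshift d' t) = lshift (d' + d) t.
Proof.
apply: sval_inj; apply: funext => w /=; congr (sval t).
by apply: funext => z; rewrite /zshift addrA.
Qed.

Lemma lequiv_lshift d t t' : lequiv t t' -> lequiv (lshift d t) (lshift d t').
Proof.
have loc := local_comp (fun p => p.1 = p.2) (local_pair (svalP t) (svalP t')).
exact: (almost_zshift d loc).1.
Qed.

Definition shift_by (d : int) (x : ulim) : ulim := cls (lshift d (rep x)).

Lemma shift_by_cls d t : shift_by d (cls t) = cls (lshift d t).
Proof. by apply: cls_eq; apply: lequiv_lshift; exact: ev_cls. Qed.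

Lemma shift_byK d d' : d + d' = 0 -> cancel (shift_by d) (shift_by d').
Proof. by move=> dd' x; rewrite [shift_by d x]/shift_by shift_by_cls lshiftD dd' lshift0 clsK. Qed.

Lemma shift_by_fun d f (args : 'I_(fun_ar f) -> ulim) :
  shift_by d (interp_fun args) = interp_fun (shift_by d \o args).
Proof.
rewrite /= shift_by_cls; apply: cls_eq.
apply: filterS (evs_cls (fun i => lshift d (rep (args i)))) => w /= E.
by rewrite /evs in E; congr interp_fun; apply: funext => i /=; rewrite -(congr1 (fun f => f i) E).
Qed.

Lemma shift_by_rel d r (args : 'I_(rel_ar r) -> ulim) :
  interp_rel args <-> interp_rel (shift_by d \o args).
Proof.
have loc := local_comp (@interp_rel L M r) (local_tuple (fun i => svalP (rep (args i)))).
rewrite /= (almost_zshift d loc).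
apply: (filter_iff (evs_cls (fun i => lshift d (rep (args i))))) => w /= E.
by rewrite /evs in E *; rewrite E.
Qed.

Definition shift : automorphism ulim :=
  Automorphism (shift_byK (addrN 1)) (shift_byK (addNr 1)) (shift_by_fun 1) (shift_by_rel 1).

Lemma local_at z : local (fun w : zseq => w z).
Proof. by exists (absz z) => w w' ag; apply: ag. Qed.

Definition lcoord (z : int) (c : 'I_m) : lfun :=
  exist _ (fun w => w z c) (local_comp (fun y => y c) (local_at z)).

Definition bseq (z : int) : 'I_m -> ulim := fun c => cls (lcoord z c).

Lemma shift_by_bseq d z c : shift_by d (bseq z c) = bseq (z + d) c.
Proof. by rewrite /bseq shift_by_cls; congr cls; exact: sval_inj. Qed.

Lemma aut_pow_bseq k c : aut_pow shift k (bseq 0 c) = bseq k c.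
Proof.
elim/int_ind: k => [|p IH|p IH] //.
  by rewrite (_ : p.+1%:Z = p%:Z + 1) ?aut_powD1 ?IH; [exact: shift_by_bseq | lia].
by rewrite (_ : - p.+1%:Z = - p%:Z - 1) ?aut_powB1 ?IH; [exact: shift_by_bseq | lia].
Qed.

Lemma evs_bseq k (zs : 'I_k -> int) (cs : 'I_k -> 'I_m) :
  almost (fun w => evs (fun x => bseq (zs x) (cs x)) w = (fun x => w (zs x) (cs x))).
Proof. exact: evs_cls (fun x => lcoord (zs x) (cs x)). Qed.

Lemma sat_bseq p (psi : formula L p) (zs : 'I_p -> int) (cs : 'I_p -> 'I_m) :
  sat (fun x => bseq (zs x) (cs x)) psi <->
  almost (fun w => sat (fun x => w (zs x) (cs x)) psi).
Proof. by rewrite los; apply: (filter_iff (evs_bseq zs cs)) => w ->. Qed.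

Lemma ulim_indiscernible : in_W (bseq 0) shift.
Proof.
move=> N p psi g i j Ii Ij.
have pow_bseq (h : 'I_N -> int) :
    (fun x => aut_pow shift (h (g x).1) (bseq 0 (g x).2)) = (fun x => bseq (h (g x).1) (g x).2).
  by apply: funext => x; exact: aut_pow_bseq.
rewrite !pow_bseq !sat_bseq.
exact: (almost_indiscernible (fun v => sat (fun x => v (g x).1 (g x).2) psi) Ii Ij).
Qed.

Variables (n : nat) (phi : formula L (n + m)).
Hypothesis bs_chain : forall i, strict_subset (defset phi (bs i)) (defset phi (bs i.+1)).

Lemma evs_env2 (a : 'I_n -> ulim) (b : 'I_m -> ulim) w :
  evs (env2 a b) w = env2 (evs a w) (evs b w).
Proof. by apply: funext => k; rewrite /evs /env2; case: split. Qed.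

Lemma defset_bseq z (a : 'I_n -> ulim) :
  defset phi (bseq z) a <-> almost (fun w => defset phi (w z) (evs a w)).
Proof.
rewrite /defset los; apply: (filter_iff (evs_bseq (fun _ => z) id)) => w E.
by rewrite evs_env2 E.
Qed.

Definition chain_witness (y0 y1 : 'I_m -> M) : 'I_n -> M :=
  epsilon (inhabits (fun _ => inhabitant M))
    (fun a => defset phi y1 a /\ ~ defset phi y0 a).

Definition lwitness (i : 'I_n) : lfun :=
  exist _ (fun w => chain_witness (w 0) (w 1) i)
    (local_comp (fun y => chain_witness y.1 y.2 i) (local_pair (local_at 0) (local_at 1))).

Lemma defset_bseq_strict : strict_subset (defset phi (bseq 0)) (defset phi (bseq 1)).
Proof.
have lt01 u : (e u (absz (0 + u.2%:Z)%R) < e u (absz (1 + u.2%:Z)%R))%N.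
  by apply: e_incr; lia.
pose cw (w : zseq) := chain_witness (w 0) (w 1).
have spec : almost (fun w => defset phi (w 1) (cw w) /\ ~ defset phi (w 0) (cw w)).
  apply: almost_sample => u.
  exact: epsilon_spec (strict_chain_witness bs_chain (lt01 u)).
have E : almost (fun w => evs (cls \o lwitness) w = cw w) := evs_cls lwitness.
split=> [a | ].
  rewrite !defset_bseq => h.
  have mono : almost (fun w => forall x, defset phi (w 0) x -> defset phi (w 1) x).
    exact: almost_sample (fun u => strict_chain_le bs_chain (ltnW (lt01 u))).
  by apply: filterS (filterI h mono) => w [hw]; apply.
exists (cls \o lwitness); rewrite !defset_bseq; split.
  by apply: filterS (filterI E spec) => w [-> []].
move=> h; apply: (filter_not_empty almost).
by apply: filterS (filterI h (filterI E spec)) => w [hw [E1 [_ nh]]]; rewrite -E1 in nh.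
Qed.

Lemma ulim_aut_image_strict :
  strict_subset (defset phi (bseq 0)) (aut_image shift (defset phi (bseq 0))).
Proof.
apply: strict_subset_iff defset_bseq_strict => // a.
rewrite aut_image_defset (_ : tact shift (bseq 0) = bseq 1) //.
by apply: funext => c; rewrite /tact /= shift_by_bseq add0r.
Qed.

End UltraLimit.

Lemma index_ultrafilter :
  exists2 U : set_system index, UltraFilter U & forall a, U (index_le a).
Proof.
apply: (ultrafilter_cofinal ([::], 0%N)) => [a | a b c [ab1 ab2] [bc1 bc2] | a b].
- by split.
- by split=> [k /ab1 /bc1 // | ]; exact: leq_trans bc2.
exists (a.1 ++ b.1, maxn a.2 b.2); split; split=> /=.
- by move=> k ka; apply: List.in_or_app; left.
- exact: leq_maxl.
- by move=> k kb; apply: List.in_or_app; right.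
- exact: leq_maxr.
Qed.

Lemma SOP_of_aut_image (L : language) (T : theory L) n m (phi : formula L (n + m))
    (M : structure L) (b : 'I_m -> M) (s : automorphism M) :
  is_model T M -> strict_subset (defset phi b) (aut_image s (defset phi b)) -> SOP T phi.
Proof.
by move=> MT sb; exists M, (fun i => tact (iter i s) b); split=> //; exact: aut_image_strict_chain.
Qed.

Lemma indiscernible_aut_image_of_SOP (L : language) (T : theory L) n m
    (phi : formula L (n + m)) :
  SOP T phi -> exists (M : structure L) (b : 'I_m -> M) (s : automorphism M),
    [/\ is_model T M, strict_subset (defset phi b) (aut_image s (defset phi b)) & in_W b s].
Proof.
move=> [M [bs [MT chain]]].
have [U U_ultra U_cofinal] := index_ultrafilter.
pose homogeneous_enum (u : index) (f : nat -> nat) := {homo f : i j / i < j} /\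
  forall k, List.In k u.1 -> forall s t : 'I_(projT1 k) -> nat,
    increasing s -> increasing t -> (projT2 k (f \o s) <-> projT2 k (f \o t)).
have [e eP] : exists e, forall u, homogeneous_enum u (e u).
  by apply: choice => u; have [f finc fhom] := ramsey_enum u.1; exists f.
have e_incr u := (eP u).1; have e_hom u := (eP u).2.
exists (ulim bs U e), (bseq bs U e 0), (shift bs U_cofinal e_hom); split.
- exact: ulim_model.
- exact: (ulim_aut_image_strict U_cofinal e_incr e_hom chain).
- exact: ulim_indiscernible.
Qed.

Theorem proposition4p11 (L : language) (T : theory L) (hT : complete_theory T)
  (n m : nat) (phi : formula L (n + m)) :
  [<-> SOP T phi;
       exists (M : structure L) (b : 'I_m -> M) (s : automorphism M),
         is_model T M /\
         strict_subset (defset phi b) (aut_image s (defset phi b));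
       exists (M : structure L) (b : 'I_m -> M) (s : automorphism M),
         is_model T M /\ xi_Theta_shape s (defset phi b);
       exists (M : structure L) (b : 'I_m -> M) (s : automorphism M),
         is_model T M /\ xi_Theta_shape s (defset phi b) /\ in_W b s].
Proof.
tfae.
- by move=> /indiscernible_aut_image_of_SOP[M [b [s [MT sb _]]]]; exists M, b, s.
- by move=> [M [b [s [MT /xi_Theta_shape_of_strict sb]]]]; exists M, b, s.
- move=> [M [b [s [MT /strict_of_xi_Theta_shape sb]]]].
  have [M' [b' [s' [M'T sb' W]]]] := indiscernible_aut_image_of_SOP (SOP_of_aut_image MT sb).
  by exists M', b', s'; split=> //; split=> //; exact: xi_Theta_shape_of_strict.
- move=> [M [b [s [MT [/strict_of_xi_Theta_shape sb _]]]]].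
  exact: SOP_of_aut_image MT sb.
Qed.
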